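(* For every nondegenerate counterclockwise triangle $(A,B,C)$ there exists a unique hexagonal grid $\varphi$ with reference triangle $(A,B,C)$, i.e. with $\varphi(\{0,1\})=A$, $\varphi(\{1,\zeta\})=B$, $\varphi(\{\zeta,0\})=C$.
   Context: Let $\zeta=e^{i\pi/3}$ and $\Lambda=\{m+n\zeta: m,n\in\mathbb{Z}\}$. Call $p,q\in\Lambda$ adjacent if $|p-q|=1$, and let $\mathcal{E}$ be the set of unordered pairs $\{p,q\}$ of adjacent lattice points. A hexagonal grid is a map $\varphi:\mathcal{E}\to\mathbb{C}$ such that for every $p\in\Lambda$ there exist $c_p,r_p\in\mathbb{C}$ with $\varphi(\{p,p+\zeta^k\})=c_p+r_p\zeta^k$ for $k=0,\dots,5$. Thus the six points form a regular, possibly degenerate, hexagon $H_p$ listed counterclockwise. For each set $\{p,q,s\}\subset\Lambda$ of three pairwise adjacent lattice points listed counterclockwise, the corresponding triangle of the grid is $(\varphi(\{p,q\}),\varphi(\{q,s\}),\varphi(\{s,p\}))$. The reference triangle of $\varphi$ is $(\varphi(\{0,1\}),\varphi(\{1,\zeta\}),\varphi(\{\zeta,0\}))$. When the reference triangle is counterclockwise and nondegenerate, the three hexagons $H_0,H_1,H_\zeta$ are the regular hexagons erected outwardly on its sides. The grid triangles sharing a vertex with the reference triangle are its flank triangles. *)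

From HB Require Import structures.
From mathcomp Require Import all_boot all_order all_algebra.
From mathcomp Require Import complex.
From mathcomp Require Import reals.
Set Implicit Arguments. Unset Strict Implicit. Unset Printing Implicit Defensive.
Import Order.TTheory GRing.Theory Num.Theory.
Local Open Scope ring_scope.
Local Open Scope complex_scope.

Definition zeta (R : realType) : R[i] := (2^-1) +i* (Num.sqrt 3 / 2).

Definition in_lattice (R : realType) (z : R[i]) : Prop :=
  exists m n : int, z = m%:~R + n%:~R * zeta R.

Definition adjacent (R : realType) (p q : R[i]) : Prop := `|p - q| = 1.

(* A map on the unordered adjacent pairs {p,q} is encoded as a function
   phi : C -> C -> C, of which only the values phi p q with p, q adjacent
   lattice points are relevant, and which is symmetric there. *)
Definition hexagonal_grid (R : realType) (phi : R[i] -> R[i] -> R[i]) : Prop :=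
  (forall p q, in_lattice p -> in_lattice q -> adjacent p q -> phi p q = phi q p) /\
  (forall p, in_lattice p -> exists c r : R[i],
      forall k : nat, (k < 6)%N -> phi p (p + zeta R ^+ k) = c + r * zeta R ^+ k).

Definition ccw_nondegenerate (R : realType) (A B C : R[i]) : Prop :=
  0 < complex.Im ((B - A)^* * (C - A)).

Definition has_reference_triangle (R : realType) (phi : R[i] -> R[i] -> R[i])
    (A B C : R[i]) : Prop :=
  [/\ phi 0 1 = A, phi 1 (zeta R) = B & phi (zeta R) 0 = C].

From HB Require Import structures.
From mathcomp Require Import all_boot all_order all_algebra.
From mathcomp Require Import complex.
From mathcomp Require Import reals.
From mathcomp Require Import ring lra zify.
Import Order.TTheory GRing.Theory Num.Theory.
Local Open Scope ring_scope.

(* A hexagonal grid restricted to the six edges at a lattice point p is an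
   affine function of the direction zeta^k, so two grids that agree on two
   consecutive edges at p agree on all six.  The reference triangle supplies
   two such edges at 0 and at 1; agreement then propagates from any pair of
   adjacent vertices to their common neighbours, hence around each vertex and
   over the whole lattice.  For existence, phi(p, q) = c + s (p + q) + t p q
   restricts on the edges at p to (c + 2 s p + t p^2) + (s + t p) (q - p), and
   the three coefficients can be solved for from A, B, C. *)

Section Zeta.

Context {R : realType}.

Lemma zeta_sqr : zeta R ^+ 2 = zeta R - 1.
Proof.
have sqrt3 : Num.sqrt (3 : R) * Num.sqrt 3 = 3 by rewrite -expr2 sqr_sqrtr ?ler0n.
apply/eqP; rewrite expr2 eq_complex /=; apply/andP; split; apply/eqP.
  by rewrite mulrCA !mulrA sqrt3; field.
by field.
Qed.

Lemma conj_zeta : (zeta R)^*%C = 1 - zeta R.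
Proof. by apply/eqP; rewrite eq_complex /=; apply/andP; split; apply/eqP; field. Qed.

Lemma zeta_neq1 : zeta R != 1.
Proof. by rewrite eq_complex /= negb_and; apply/orP; left; apply/eqP; lra. Qed.

Lemma zeta_neq0 : zeta R != 0.
Proof. by rewrite eq_complex /= negb_and; apply/orP; left; apply/eqP; lra. Qed.

Lemma zetaX3 : zeta R ^+ 3 = -1.
Proof. by rewrite exprS zeta_sqr mulrBr mulr1 -expr2 zeta_sqr; ring. Qed.

Lemma zetaX6 : zeta R ^+ 6 = 1.
Proof. by rewrite (exprM _ 3 2) zetaX3 expr2 mulrNN mulr1. Qed.

Lemma zetaXS3 k : zeta R ^+ k.+3 = - zeta R ^+ k.
Proof. by rewrite -addn3 exprD zetaX3 mulrN1. Qed.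

Lemma zetaXS2 k : zeta R ^+ k.+2 = zeta R ^+ k.+1 - zeta R ^+ k.
Proof. by rewrite -addn2 exprD zeta_sqr exprS; ring. Qed.

Lemma normr_zetaX k : `|zeta R ^+ k| = 1.
Proof.
have sqr_norm_zeta : `|zeta R| ^+ 2 = 1.
  by rewrite sqr_normc conj_zeta mulrBr mulr1 -expr2 zeta_sqr; ring.
by rewrite normrX (eqP (_ : `|zeta R| == 1)) ?expr1n // -sqrp_eq1 ?sqr_norm_zeta.
Qed.

Lemma adjacent_addzetaX (p : R[i]) k : adjacent p (p + zeta R ^+ k).
Proof. by rewrite /adjacent opprD addNKr normrN normr_zetaX. Qed.

Lemma adjacent_zetaXadd (p : R[i]) k : adjacent (p + zeta R ^+ k) p.
Proof. by rewrite /adjacent addrC addKr normr_zetaX. Qed.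

Lemma eisenstein_unit (a b : int) :
  `|a%:~R + b%:~R * zeta R| = 1 -> exists k, a%:~R + b%:~R * zeta R = zeta R ^+ k.
Proof.
have norm_sqr : `|a%:~R + b%:~R * zeta R| ^+ 2 = (a * a + a * b + b * b)%:~R.
  have conj_ab : (a%:~R + b%:~R * zeta R)^*%C = a%:~R + b%:~R * (1 - zeta R) :> R[i].
    by rewrite rmorphD rmorphM !rmorph_int -conj_zeta.
  have zeta_norm : zeta R * (1 - zeta R) = 1.
    by rewrite mulrBr mulr1 -expr2 zeta_sqr; ring.
  rewrite sqr_normc conj_ab !intrD !intrM.
  rewrite [LHS](_ : _ = a%:~R * a%:~R + a%:~R * b%:~R + b%:~R * b%:~R * (zeta R * (1 - zeta R))).
    by rewrite zeta_norm mulr1.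
  by ring.
move=> /(congr1 (fun x => x ^+ 2)); rewrite norm_sqr expr1n => ab1.
have {}ab1 : a * a + a * b + b * b = 1 by apply: (@intr_inj R[i]); rewrite ab1.
have [b0|[b1|bN1]] : b = 0 \/ b = 1 \/ b = -1 by nia.
- have [->|->] : a = 1 \/ a = -1 by nia.
  + by exists 0%N; rewrite b0; ring.
  + by exists 3%N; rewrite b0 zetaX3; ring.
- have [->|->] : a = 0 \/ a = -1 by nia.
  + by exists 1%N; rewrite b1; ring.
  + by exists 2%N; rewrite b1 zeta_sqr; ring.
- have [->|->] : a = 0 \/ a = 1 by nia.
  + by exists 4%N; rewrite bN1 zetaXS3; ring.
  + by exists 5%N; rewrite bN1 zetaXS3 zeta_sqr; ring.
Qed.

End Zeta.

Section Lattice.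

Context {R : realType}.

Lemma lattice_addzetaX {p : R[i]} k : in_lattice p -> in_lattice (p + zeta R ^+ k).
Proof.
have [m [n zetaXE]] : exists m n : int, zeta R ^+ k = m%:~R + n%:~R * zeta R.
  elim: k => [|k [m [n IHk]]]; first by exists 1, 0; rewrite expr0; ring.
  exists (- n), (m + n); rewrite exprS IHk mulrDr mulrCA -expr2 zeta_sqr.
  by rewrite intrN intrD; ring.
case=> [m' [n' ->]]; exists (m' + m), (n' + n).
by rewrite zetaXE !intrD; ring.
Qed.

Lemma lattice_ind {P : R[i] -> Prop} :
  P 0 -> (forall p k, in_lattice p -> P p -> P (p + zeta R ^+ k)) ->
  forall p, in_lattice p -> P p.
Proof.
move=> P0 Pstep.
pose Q p := in_lattice p /\ P p.
have Qstep p k : Q p -> Q (p + zeta R ^+ k).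
  by case=> lp Pp; split; [exact: lattice_addzetaX | exact: Pstep].
have Qline p j (m : int) : Q p -> Q (p + m%:~R * zeta R ^+ j).
  move=> Qp; elim/int_ind: m => [|n|n].
  - by rewrite mul0r addr0.
  - by rewrite intS intrD mulrDl mul1r addrCA addrC; apply: Qstep.
  - rewrite -(opprK (zeta R ^+ j)) -zetaXS3 intS opprD intrD mulrDl mulrNN mul1r.
    by move=> Qn; rewrite addrCA addrC; apply: Qstep.
have Q0 : Q 0 by split; first by exists 0, 0; ring.
move=> _ [m [n ->]]; have [] := Qline _ 0%N m (Qline 0 1%N n Q0).
by rewrite add0r expr0 expr1 mulr1 addrC.
Qed.

Lemma adjacent_lattice_zetaX {p q : R[i]} :
  in_lattice p -> in_lattice q -> adjacent p q -> exists k, q = p + zeta R ^+ k.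
Proof.
move=> [m [n ->]] [m' [n' ->]]; rewrite /adjacent -normrN => pq1.
have [k zetaXE] : exists k, (m' - m)%:~R + (n' - n)%:~R * zeta R = zeta R ^+ k.
  by apply: eisenstein_unit; rewrite !intrB -[RHS]pq1; congr `|_|; ring.
by exists k; rewrite -zetaXE !intrB; ring.
Qed.

End Lattice.

Section Uniqueness.

Context {R : realType}.

Lemma hexagonal_grid_star {f : R[i] -> R[i] -> R[i]} {p} :
  hexagonal_grid f -> in_lattice p ->
  exists c r, forall k, f p (p + zeta R ^+ k) = c + r * zeta R ^+ k.
Proof.
move=> [_ f_star] lp; have [c [r fE]] := f_star p lp; exists c, r => k.
by rewrite -(expr_mod k zetaX6) fE // ltn_mod.
Qed.

Variables phi psi : R[i] -> R[i] -> R[i].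
Hypotheses (phi_grid : hexagonal_grid phi) (psi_grid : hexagonal_grid psi).

Definition agrees_at (p : R[i]) :=
  forall k, phi p (p + zeta R ^+ k) = psi p (p + zeta R ^+ k).

(* Both stars are affine in the direction zeta^k, and consecutive directions
   differ by zeta^j (1 - zeta) != 0, so two values fix the affine map. *)
Lemma agrees_at_consecutive p j : in_lattice p ->
  phi p (p + zeta R ^+ j) = psi p (p + zeta R ^+ j) ->
  phi p (p + zeta R ^+ j.+1) = psi p (p + zeta R ^+ j.+1) -> agrees_at p.
Proof.
move=> lp; have [c [r phiE]] := hexagonal_grid_star phi_grid lp.
have [c' [r' psiE]] := hexagonal_grid_star psi_grid lp.
rewrite !phiE !psiE => eq_j eq_j1.
have step_neq0 : zeta R ^+ j * (1 - zeta R) != 0.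
  by rewrite mulf_neq0 ?expf_neq0 ?zeta_neq0 // subr_eq0 eq_sym zeta_neq1.
have r_eq : r = r'.
  have diffE : (r - r') * (zeta R ^+ j * (1 - zeta R)) =
      (c + r * zeta R ^+ j - (c' + r' * zeta R ^+ j))
      - (c + r * zeta R ^+ j.+1 - (c' + r' * zeta R ^+ j.+1)).
    by rewrite exprSr; ring.
  move: diffE; rewrite eq_j eq_j1 !subrr => /eqP.
  by rewrite mulf_eq0 (negPf step_neq0) orbF subr_eq0 => /eqP.
have c_eq : c = c' by move: eq_j; rewrite r_eq => /addIr.
by move=> k; rewrite phiE psiE r_eq c_eq.
Qed.

Lemma agrees_on_reversed_edge p k : in_lattice p -> agrees_at p ->
  phi (p + zeta R ^+ k) p = psi (p + zeta R ^+ k) p.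
Proof.
move=> lp agree_p; have lpk := lattice_addzetaX k lp.
have adj := adjacent_zetaXadd p k.
by rewrite phi_grid.1 // psi_grid.1 // agree_p.
Qed.

(* The common neighbour p + zeta^k.+1 sees p and p + zeta^k in the
   consecutive directions k.+4 and k.+5. *)
Lemma agrees_at_common_neighbour p k : in_lattice p ->
  agrees_at p -> agrees_at (p + zeta R ^+ k) -> agrees_at (p + zeta R ^+ k.+1).
Proof.
move=> lp agree_p agree_pk.
apply: (@agrees_at_consecutive _ k.+4); first exact: lattice_addzetaX.
  by rewrite zetaXS3 addrK; apply: agrees_on_reversed_edge.
have -> : p + zeta R ^+ k.+1 + zeta R ^+ k.+4.+1 = p + zeta R ^+ k.
  by rewrite zetaXS3 zetaXS2; ring.
have -> : p + zeta R ^+ k.+1 = p + zeta R ^+ k + zeta R ^+ k.+2.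
  by rewrite zetaXS2; ring.
by apply: agrees_on_reversed_edge => //; apply: lattice_addzetaX.
Qed.

Lemma agrees_around p k : in_lattice p ->
  agrees_at p -> agrees_at (p + zeta R ^+ k) -> forall j, agrees_at (p + zeta R ^+ j).
Proof.
move=> lp agree_p agree_pk.
have walk i : agrees_at (p + zeta R ^+ (i + k)) /\ agrees_at (p + zeta R ^+ (i + k).+1).
  elim: i => [|i [_ agree_next]]; first by split; last exact: agrees_at_common_neighbour.
  by split; last exact: agrees_at_common_neighbour.
move=> j; have [] := walk (j + 5 * k)%N.
by rewrite -addnA -[(5 * k + k)%N]mulSnr exprD exprM zetaX6 expr1n mulr1.
Qed.

Definition agrees_near (p : R[i]) := agrees_at p /\ forall k, agrees_at (p + zeta R ^+ k).

Lemma agrees_near_addzetaX p k : in_lattice p ->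
  agrees_near p -> agrees_near (p + zeta R ^+ k).
Proof.
move=> lp [agree_p agree_star]; split => //.
apply: (@agrees_around _ k.+3); [exact: lattice_addzetaX | exact: agree_star |].
by rewrite zetaXS3 addrK.
Qed.

Lemma agrees_near0 {A B C : R[i]} :
  has_reference_triangle phi A B C -> has_reference_triangle psi A B C ->
  agrees_near 0.
Proof.
move=> [phiA phiB phiC] [psiA psiB psiC].
have l0 : in_lattice (0 : R[i]) by exists 0, 0; ring.
have l1 : in_lattice (1 : R[i]) by exists 1, 0; ring.
have lz : in_lattice (zeta R) by exists 0, 1; ring.
have adj0z : adjacent 0 (zeta R) by have := adjacent_addzetaX (0 : R[i]) 1; rewrite add0r expr1.
have adj10 : adjacent (1 : R[i]) 0.
  by have := adjacent_addzetaX (1 : R[i]) 3; rewrite zetaX3 subrr.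
have agree0 : agrees_at 0.
  apply: (@agrees_at_consecutive _ 0) => //; rewrite add0r ?expr0 ?expr1.
    by rewrite phiA psiA.
  by rewrite phi_grid.1 // psi_grid.1 // phiC psiC.
have agree1 : agrees_at (0 + zeta R ^+ 0).
  rewrite add0r expr0; apply: (@agrees_at_consecutive _ 2) => //.
    by rewrite zeta_sqr addrC subrK phiB psiB.
  by rewrite zetaX3 subrr phi_grid.1 // psi_grid.1 // phiA psiA.
by split; last exact: agrees_around agree1.
Qed.

End Uniqueness.

Section Existence.

Context {R : realType}.

Definition bilinear_grid (c s t : R[i]) (p q : R[i]) := c + s * (p + q) + t * p * q.

Lemma bilinear_grid_hexagonal c s t : hexagonal_grid (bilinear_grid c s t).
Proof.
split=> [p q _ _ _ | p _]; first by rewrite /bilinear_grid; ring.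
exists (c + s * (2 * p) + t * p * p), (s + t * p) => k _.
by rewrite /bilinear_grid; ring.
Qed.

Lemma bilinear_grid_reference (A B C : R[i]) :
  exists c s t, has_reference_triangle (bilinear_grid c s t) A B C.
Proof.
have zeta_neq0 := @zeta_neq0 R.
have one_sub_zeta_neq0 : 1 - zeta R != 0 by rewrite subr_eq0 eq_sym zeta_neq1.
pose s := (A - C) / (1 - zeta R); pose c := A - s.
exists c, s, ((B - c - s * (1 + zeta R)) / zeta R).
by rewrite /bilinear_grid /c /s; split; field; rewrite ?one_sub_zeta_neq0 ?zeta_neq0.
Qed.

End Existence.

Theorem mainTheorem6 (R : realType) (A B C : R[i]) :
  ccw_nondegenerate A B C ->
  (exists phi, hexagonal_grid phi /\ has_reference_triangle phi A B C) /\
  (forall phi1 phi2,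
      hexagonal_grid phi1 -> has_reference_triangle phi1 A B C ->
      hexagonal_grid phi2 -> has_reference_triangle phi2 A B C ->
      forall p q, in_lattice p -> in_lattice q -> adjacent p q ->
        phi1 p q = phi2 p q).
Proof.
move=> _; split.
  have [c [s [t ref]]] := bilinear_grid_reference A B C.
  by exists (bilinear_grid c s t); split; first exact: bilinear_grid_hexagonal.
move=> phi1 phi2 grid1 ref1 grid2 ref2 p q lp lq adj.
have [k ->] := adjacent_lattice_zetaX lp lq adj.
have [agree_p _] := lattice_ind (agrees_near0 phi1 phi2 grid1 grid2 ref1 ref2)
  (agrees_near_addzetaX phi1 phi2 grid1 grid2) p lp.
exact: agree_p.
Qed.
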